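(* (a) If $d\ge 3$ is odd, then $\operatorname{triv}(d,d-1)=\left\lfloor \frac{d-1}{6}\right\rfloor+1$ and $\operatorname{sign}(d,d-1)=\left\lfloor \frac{d-1}{6}\right\rfloor$. (b) If $d\ge 4$ is even, then $\operatorname{triv}(d,d-1)=\operatorname{sign}(d,d-1)=\left\lfloor \frac{d+2}{6}\right\rfloor$.
   Context: $\Bbbk$ is an algebraically closed field of characteristic $0$. For an integer $d\ge 1$, $A(d)=\Bbbk[x_1,x_2,x_3]/(x_1^d,x_2^d,x_3^d)=\bigoplus_j A(d)_j$ with its standard grading. $S_3$ acts on $A(d)$ by permuting variables. The linear map $E:A(d)_{j+1}\to A(d)_j$ is defined on the monomial basis by $E(x_1^{a_1}x_2^{a_2}x_3^{a_3})=\sum_{k=1}^{3} a_k(d-a_k)\,x_1^{a_1}\cdots x_k^{a_k-1}\cdots x_3^{a_3}$; it commutes with the $S_3$-action. $\operatorname{triv}(d,j)$ and $\operatorname{sign}(d,j)$ denote the multiplicities of the trivial and sign representations of $S_3$ in $\operatorname{Ker}(E)\cap A(d)_j$. *)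

From HB Require Import structures.
From mathcomp Require Import all_boot all_order all_algebra all_fingroup.
Set Implicit Arguments. Unset Strict Implicit. Unset Printing Implicit Defensive.
Import GRing.Theory.
Local Open Scope ring_scope.

(* Exponent vectors of monomials x1^a1 x2^a2 x3^a3 of A(d), 0 <= a_i < d. *)
Definition Mon (d : nat) : finType := {ffun 'I_3 -> 'I_d}.
Definition mdeg (d : nat) (m : Mon d) : nat := (\sum_(i < 3) (m i : nat))%N.

(* Number of monomials; A(d) is identified with row vectors 'rV[k]_(N d)
   of coefficients with respect to the monomial basis. *)
Definition N (d : nat) : nat := #|{: Mon d}|.
Definition mon (d : nat) (i : 'I_(N d)) : Mon d := enum_val i.

Definition lowered (d : nat) (m m' : Mon d) (l : 'I_3) : bool :=
  (0 < (m l : nat))%N &&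
  [forall t, (m' t : nat) == (if t == l then (m t : nat).-1 else m t)].

Section Defs.
Variable k : fieldType.

(* Matrix of E acting on row vectors:  E(x^m) = sum_l m_l (d - m_l) x^(m - e_l) *)
Definition Emx (d : nat) : 'M[k]_(N d) :=
  \matrix_(i, j) \sum_(l < 3)
     (if lowered (mon i) (mon j) l
      then (((mon i l : nat) * (d - mon i l))%N)%:R else 0).

(* Row space = A(d)_j, the span of monomials of degree j *)
Definition Amx (d j : nat) : 'M[k]_(N d) :=
  diag_mx (\row_i ((mdeg (mon i) == j)%:R : k)).

(* S_3 permuting the variables: s sends x_t to x_(s t) *)
Definition act (d : nat) (s : 'S_3) (m : Mon d) : Mon d := [ffun t => m (s^-1 t)%g].
Definition Pmx (d : nat) (s : 'S_3) : 'M[k]_(N d) :=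
  \matrix_(i, j) ((mon j == act s (mon i))%:R).

Definition KerEj (d j : nat) : 'M[k]_(N d) := (kermx (Emx d) :&: Amx d j)%MS.

(* multiplicity of the trivial rep = dim of the S_3-invariant subspace *)
Definition triv (d j : nat) : nat :=
  \rank (KerEj d j :&: \bigcap_(s : 'S_3) kermx (Pmx d s - 1%:M))%MS.

(* multiplicity of the sign rep = dim of the sign-isotypic subspace *)
Definition sign (d j : nat) : nat :=
  \rank (KerEj d j :&: \bigcap_(s : 'S_3) kermx (Pmx d s - ((-1) ^+ odd_perm s)%:M))%MS.
End Defs.

From Pilot Require Import Defs.
From HB Require Import structures.
From mathcomp Require Import all_boot all_order all_algebra all_fingroup.
From mathcomp Require Import zify.

Set Implicit Arguments.
Unset Strict Implicit.
Unset Printing Implicit Defensive.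
Import GRing.Theory.

(* E commutes with the S_3-action and maps A(d)_j onto A(d)_(j-1) for j < d.  For
   a linear character chi of S_3, rank-nullity on chi-isotypic parts then gives
   mult_chi (Ker E ∩ A(d)_j) = dim A(d)_j^chi - dim A(d)_(j-1)^chi.  The Reynolds
   projector shows that A(d)_j^triv (resp. A(d)_j^sign) has a basis indexed by the
   degree j monomials x^a with a_1 >= a_2 >= a_3 (resp. a_1 > a_2 > a_3).  Raising
   a_1 matches those of degree j - 1 with those of degree j and a_1 > a_2 + b,
   b = 0 (resp. 1); the remaining ones, a_1 = a_2 + b, are counted by
   #{a_2 | 2 a_2 + b <= j <= 3 a_2}, which at j = d - 1 gives the claim. *)

Section GeneralLinearAlgebra.
Local Open Scope ring_scope.
Variable F : fieldType.

Lemma mxrank_diag n (r : 'rV[F]_n) : \rank (diag_mx r) = #|[pred i | r 0 i != 0]|.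
Proof.
have /mxdirectP /= rank_sum := @mxdirect_delta F _ [pred i | r 0 i != 0] n id (in2W (@inj_id _)).
have -> : \rank (diag_mx r) = \rank (\sum_(i | r 0 i != 0) <<delta_mx 0 i : 'rV[F]_n>>)%MS.
  apply/eqmx_rank/andP; split.
    apply/row_subP => i; rewrite row_diag_mx.
    have [->|nz] := eqVneq (r 0 i) 0; first by rewrite scale0r sub0mx.
    by apply/scalemx_sub/(sumsmx_sup i); rewrite ?genmxE.
  apply/sumsmx_subP => i nz; rewrite genmxE.
  have -> : delta_mx 0 i = (r 0 i)^-1 *: row i (diag_mx r) :> 'rV[F]_n.
    by rewrite row_diag_mx scalerA mulVf // scale1r.
  exact/scalemx_sub/row_sub.
by rewrite rank_sum -sum1_card; apply: eq_bigr => i _; rewrite mxrank_gen mxrank_delta.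
Qed.

Lemma mxrank_sandwich n (A B : 'M[F]_n) :
  \rank (A *m B *m A) = \rank A -> \rank (A *m B) = \rank A.
Proof.
move=> rABA; apply/eqP; rewrite eqn_leq mxrankM_maxl /= -{1}rABA.
exact: mxrankM_maxl.
Qed.

End GeneralLinearAlgebra.

Section Reynolds.
Local Open Scope ring_scope.
Variables (k : fieldType) (gT : finGroupType) (n : nat).
Variables (rho : gT -> 'M[k]_n) (chi : gT -> k).
Hypothesis rhoM : forall s t, rho s *m rho t = rho (s * t)%g.
Hypothesis chiM : forall s t, chi (s * t)%g = chi s * chi t.
Hypothesis chi_sqr : forall s, chi s * chi s = 1.

Definition reynolds : 'M[k]_n := \sum_(s : gT) chi s *: rho s.
Definition isotypic : 'M[k]_n := (\bigcap_(s : gT) kermx (rho s - (chi s)%:M))%MS.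

Lemma rho_reynolds t : rho t *m reynolds = chi t *: reynolds.
Proof.
rewrite /reynolds mulmx_sumr scaler_sumr [RHS](reindex_inj (mulgI t)) /=.
by apply: eq_bigr => s _; rewrite -scalemxAr rhoM scalerA chiM mulrA chi_sqr mul1r.
Qed.

Lemma reynolds_rho t : reynolds *m rho t = chi t *: reynolds.
Proof.
rewrite /reynolds mulmx_suml scaler_sumr [RHS](reindex_inj (mulIg t)) /=.
by apply: eq_bigr => s _; rewrite -scalemxAl rhoM scalerA chiM mulrCA chi_sqr mulr1.
Qed.

Lemma reynolds_commute (M : 'M_n) :
  (forall s, rho s *m M = M *m rho s) -> reynolds *m M = M *m reynolds.
Proof.
move=> rhoC; rewrite /reynolds mulmx_suml mulmx_sumr.
by apply: eq_bigr => s _; rewrite -scalemxAl -scalemxAr rhoC.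
Qed.

Lemma sub_isotypicP m (A : 'M_(m, n)) :
  reflect (forall s, A *m rho s = chi s *: A) (A <= isotypic)%MS.
Proof.
apply: (iffP sub_bigcapmxP) => [A_iso s | A_eig s _]; last first.
  by apply/sub_kermxP; rewrite mulmxBr mul_mx_scalar A_eig subrr.
by move/sub_kermxP: (A_iso s isT); rewrite mulmxBr mul_mx_scalar => /eqP; rewrite subr_eq0 => /eqP.
Qed.

Lemma isotypic_reynolds m (A : 'M_(m, n)) :
  (A <= isotypic)%MS -> A *m reynolds = #|gT|%:R *: A.
Proof.
move/sub_isotypicP => A_eig; rewrite /reynolds mulmx_sumr scaler_nat -sumr_const.
by apply: eq_bigr => s _; rewrite -scalemxAr A_eig scalerA chi_sqr scale1r.
Qed.

Hypothesis order_neq0 : (#|gT|%:R : k) != 0.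

Lemma capmx_isotypic (A : 'M_n) : A *m A = A ->
  (forall s, rho s *m A = A *m rho s) -> (A :&: isotypic :=: A *m reynolds)%MS.
Proof.
move=> AA rhoC; apply/eqmxP/andP; split; last first.
  rewrite sub_capmx; apply/andP; split; first by rewrite -reynolds_commute // submxMl.
  by apply/sub_isotypicP => s; rewrite -mulmxA reynolds_rho scalemxAr.
set C := (A :&: isotypic)%MS.
have CA : C *m A = C.
  have /submxP [D ->] : (C <= A)%MS by apply: capmxSl.
  by rewrite -mulmxA AA.
have CR : C *m reynolds = #|gT|%:R *: C by apply/isotypic_reynolds/capmxSr.
have -> : C = (#|gT|%:R : k)^-1 *: (C *m reynolds) by rewrite CR scalerA mulVf ?scale1r.
by apply: scalemx_sub; rewrite -{1}CA -mulmxA submxMl.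
Qed.

(* E maps the isotypic part of A onto that of B because it commutes with rho. *)
Lemma rank_ker_isotypic (E A B : 'M_n) : A *m A = A ->
  (forall s, rho s *m A = A *m rho s) -> (forall s, rho s *m E = E *m rho s) ->
  (A *m E :=: B)%MS ->
  (\rank (kermx E :&: A :&: isotypic) + \rank (B *m reynolds) = \rank (A *m reynolds))%N.
Proof.
move=> AA rhoCA rhoCE AE.
rewrite -capmxA capmxC -(capmx_isotypic AA rhoCA) -[RHS](mxrank_mul_ker _ E) addnC.
by rewrite (eqmxMr _ (capmx_isotypic AA rhoCA)) -mulmxA reynolds_commute // mulmxA (eqmxMr _ AE).
Qed.

End Reynolds.

(* Otherwise the [act] of action.v would shadow that of Defs. *)
Local Notation act := Defs.act.

Definition i0 : 'I_3 := @Ordinal 3 0 isT.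
Definition i1 : 'I_3 := @Ordinal 3 1 isT.
Definition i2 : 'I_3 := @Ordinal 3 2 isT.

Lemma ord3P (P : 'I_3 -> Prop) : P i0 -> P i1 -> P i2 -> forall i, P i.
Proof.
move=> P0 P1 P2 [[|[|[|i]]] lt_i3] //.
- by rewrite (_ : Ordinal _ = i0) //; apply: val_inj.
- by rewrite (_ : Ordinal _ = i1) //; apply: val_inj.
- by rewrite (_ : Ordinal _ = i2) //; apply: val_inj.
Qed.

Lemma big_ord3 (R : Type) (idx : R) (op : Monoid.law idx) (F : 'I_3 -> R) :
  \big[op/idx]_(i < 3) F i = op (op (F i0) (F i1)) (F i2).
Proof.
rewrite !big_ord_recr big_ord0 /= Monoid.mul1m.
by congr (op (op (F _) (F _)) (F _)); apply: val_inj.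
Qed.

Lemma exists_sort3 (f : 'I_3 -> nat) :
  exists p : 'S_3, (f (p i1) <= f (p i0))%N && (f (p i2) <= f (p i1))%N.
Proof.
case: (leqP (f i1) (f i0)) => h01; case: (leqP (f i2) (f i1)) => h12;
  case: (leqP (f i2) (f i0)) => h02;
  first [ by exists 1%g; rewrite !perm1; lia
        | by exists (tperm i1 i2); rewrite !permE /=; lia
        | by exists (tperm i0 i1); rewrite !permE /=; lia
        | by exists (tperm i0 i2); rewrite !permE /=; lia
        | by exists (tperm i1 i2 * tperm i0 i2)%g; rewrite !permM !permE /=; lia
        | by exists (tperm i0 i2 * tperm i1 i2)%g; rewrite !permM !permE /=; lia
        | lia ].
Qed.

Section Monomials.
Variable d : nat.
Implicit Types (m : Mon d) (s : 'S_3).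

Lemma eq_mon3 m m' : (m i0 : nat) = m' i0 -> (m i1 : nat) = m' i1 ->
  (m i2 : nat) = m' i2 -> m = m'.
Proof. by move=> e0 e1 e2; apply/ffunP; apply: ord3P; apply: val_inj. Qed.

Lemma mdegE m : mdeg m = (m i0 + m i1 + m i2)%N.
Proof. exact: big_ord3. Qed.

Lemma act1 m : act 1%g m = m.
Proof. by apply/ffunP => t; rewrite ffunE invg1 perm1. Qed.

Lemma actM s t m : act (s * t)%g m = act t (act s m).
Proof. by apply/ffunP => x; rewrite !ffunE invMg permM. Qed.

Lemma big_act (R : Type) (idx : R) (op : Monoid.com_law idx) (F : nat -> R) s m :
  \big[op/idx]_(i < 3) F (act s m i) = \big[op/idx]_(i < 3) F (m i).
Proof.
rewrite (reindex_inj (@perm_inj _ s)) /=.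
by apply: eq_bigr => i _; rewrite ffunE permK.
Qed.

Lemma mdeg_act s m : mdeg (act s m) = mdeg m.
Proof. exact: (big_act _ id). Qed.

Definition ord_predn (x : 'I_d) : 'I_d := Ordinal (leq_ltn_trans (leq_pred x) (ltn_ord x)).

Definition lower m (l : 'I_3) : Mon d := [ffun t => if t == l then ord_predn (m t) else m t].

Definition raise m : Mon d := [ffun t => if t == i0 then insubd (m t) (m t).+1 else m t].

Lemma lower_at m l : (lower m l l : nat) = (m l).-1.
Proof. by rewrite ffunE eqxx. Qed.

Lemma lower_ne m l t : t != l -> lower m l t = m t.
Proof. by rewrite ffunE => /negbTE ->. Qed.

Lemma raise_i0 m : ((m i0).+1 < d)%N -> (raise m i0 : nat) = (m i0).+1.
Proof. by move=> lt_d; rewrite ffunE /= val_insubd lt_d. Qed.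

Lemma raise_ne m t : t != i0 -> raise m t = m t.
Proof. by rewrite ffunE => /negbTE ->. Qed.

Lemma loweredE m m' l : lowered m m' l = (0 < m l)%N && (m' == lower m l).
Proof.
rewrite /lowered; congr (_ && _); apply/forallP/eqP => [m'E | ->].
  by apply/ffunP => t; apply/val_inj; rewrite /= (eqP (m'E t)) ffunE; case: (t == l).
by move=> t; rewrite ffunE; case: (t == l).
Qed.

Lemma lower_act s m l : lower (act s m) (s l) = act s (lower m l).
Proof.
apply/ffunP => t; rewrite !ffunE.
have -> : (t == s l) = ((s^-1)%g t == l) by apply/eqP/eqP => [->|<-]; rewrite ?permK ?permKV.
by case: ifP.
Qed.

Lemma mdeg_lower m l : (0 < m l)%N -> mdeg (lower m l) = (mdeg m).-1.
Proof.
move: l; apply: ord3P => m_pos;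
  rewrite !mdegE ?lower_at ?lower_ne //; lia.
Qed.

Lemma lower_raise m : ((m i0).+1 < d)%N -> lower (raise m) i0 = m.
Proof.
move=> lt_d; apply/ffunP; apply: ord3P; apply: val_inj;
  rewrite /= ?lower_at ?raise_i0 ?lower_ne ?raise_ne //.
Qed.

Lemma raise_lower m : (0 < m i0)%N -> raise (lower m i0) = m.
Proof.
move=> m_pos; have lt_d : (((lower m i0) i0).+1 < d)%N.
  by rewrite lower_at; have := ltn_ord (m i0); lia.
apply/ffunP; apply: ord3P; apply: val_inj;
  by rewrite /= ?raise_i0 // ?lower_at ?raise_ne ?lower_ne // prednK.
Qed.

End Monomials.

Section MonomialBasis.
Local Open Scope ring_scope.
Variables (k : fieldType) (d : nat).
Local Notation n := (N d).
Implicit Types (m : Mon d) (s : 'S_3).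

Definition idx m : 'I_n := enum_rank m.

Lemma idxK : cancel idx (@mon d). Proof. exact: enum_rankK. Qed.
Lemma monK : cancel (@mon d) idx. Proof. exact: enum_valK. Qed.

Definition ev m : 'rV[k]_n := delta_mx 0 (idx m).

Lemma row_ev i (M : 'M[k]_n) : row i M = ev (mon i) *m M.
Proof. by rewrite rowE /ev monK. Qed.

Lemma ev_matrixP (M M' : 'M[k]_n) : (forall m, ev m *m M = ev m *m M') -> M = M'.
Proof. by move=> eqMM'; apply/row_matrixP => i; rewrite !row_ev eqMM'. Qed.

Lemma ev_diag (r : 'rV[k]_n) m : ev m *m diag_mx r = r 0 (idx m) *: ev m.
Proof. by rewrite -rowE row_diag_mx. Qed.

Lemma ev_Amx j m : ev m *m Amx k d j = (mdeg m == j)%:R *: ev m.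
Proof. by rewrite ev_diag mxE idxK. Qed.

Lemma ev_sub_Amx j m : mdeg m = j -> (ev m <= Amx k d j)%MS.
Proof.
move=> mdeg_m; have <- : ev m *m Amx k d j = ev m by rewrite ev_Amx mdeg_m eqxx scale1r.
exact: submxMl.
Qed.

Lemma ev_Pmx s m : ev m *m Pmx k d s = ev (act s m).
Proof.
rewrite -rowE; apply/rowP => j; rewrite !mxE idxK eqxx /=.
by rewrite -{1}(idxK (act s m)) (can_eq monK).
Qed.

Definition coef m l : k := (m l * (d - m l))%:R.

Lemma ev_Emx m : ev m *m Emx k d =
  \sum_(l < 3) (if (0 < m l)%N then coef m l *: ev (lower m l) else 0).
Proof.
rewrite -rowE; apply/rowP => j; rewrite !mxE summxE; apply: eq_bigr => l _.
rewrite idxK loweredE; case: (0 < m l)%N; rewrite /= ?mxE //.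
rewrite -{1}(idxK (lower m l)) (can_eq monK) eqxx /=.
by case: (j == idx (lower m l)); rewrite ?mulr1 ?mulr0.
Qed.

Lemma PmxM s t : Pmx k d s *m Pmx k d t = Pmx k d (s * t)%g.
Proof. by apply: ev_matrixP => m; rewrite mulmxA !ev_Pmx actM. Qed.

Lemma PmxA s j : Pmx k d s *m Amx k d j = Amx k d j *m Pmx k d s.
Proof.
apply: ev_matrixP => m; rewrite !mulmxA ev_Pmx !ev_Amx -scalemxAl ev_Pmx.
by rewrite mdeg_act.
Qed.

Lemma PmxE s : Pmx k d s *m Emx k d = Emx k d *m Pmx k d s.
Proof.
apply: ev_matrixP => m; rewrite !mulmxA ev_Pmx !ev_Emx mulmx_suml.
rewrite [LHS](reindex_inj (@perm_inj _ s)) /=; apply: eq_bigr => l _.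
have -> : act s m (s l) = m l by rewrite ffunE permK.
case: ifP => _; last by rewrite mul0mx.
by rewrite -scalemxAl ev_Pmx /coef !ffunE permK lower_act.
Qed.

Lemma AmxK j : Amx k d j *m Amx k d j = Amx k d j.
Proof.
apply: ev_matrixP => m; rewrite mulmxA ev_Amx -scalemxAl ev_Amx scalerA.
by case: (mdeg m == j); rewrite ?mulr1 ?mulr0.
Qed.

Lemma Amx_mulE_sub j : (Amx k d j.+1 *m Emx k d <= Amx k d j)%MS.
Proof.
apply/row_subP => i; rewrite row_ev mulmxA ev_Amx -scalemxAl.
case: eqP => mdeg_i; last by rewrite scale0r sub0mx.
rewrite scale1r ev_Emx; apply: summx_sub => l _; case: ifP => pos; last by rewrite sub0mx.
by apply/scalemx_sub/ev_sub_Amx; rewrite mdeg_lower // mdeg_i.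
Qed.

End MonomialBasis.

Section Surjectivity.
Local Open Scope ring_scope.
Variables (k : fieldType) (d : nat).
Hypothesis hk : [pchar k] =i pred0.

Lemma natr_neq0 (x : nat) : (0 < x)%N -> (x%:R : k) != 0.
Proof. by move=> x_gt0; rewrite ((pcharf0P k).1 hk x) -lt0n. Qed.

Lemma ev_sub_AmxE j (m : Mon d) :
  (j.+1 < d)%N -> mdeg m = j -> (ev k m <= Amx k d j.+1 *m Emx k d)%MS.
Proof.
move=> lt_jd; move Ht : (d - m i0)%N => t; elim: t m Ht => [|t IH] m Ht mdeg_m.
  by have := ltn_ord (m i0); lia.
set S := (Amx k d j.+1 *m Emx k d)%MS.
have lt_m0 : ((m i0).+1 < d)%N by rewrite mdegE in mdeg_m; lia.
set a := raise m.
have a0 : (a i0 : nat) = (m i0).+1 by exact: raise_i0.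
have mdeg_a : mdeg a = j.+1 by rewrite mdegE a0 !raise_ne // -mdeg_m mdegE.
(* Lowering [a] at [i1] or [i2] keeps [m i0 + 1] at [i0]: induction on [d - m i0]. *)
have S_lowered l : l != i0 ->
    ((if (0 < a l)%N then coef k a l *: ev k (lower a l) else 0) <= S)%MS.
  move=> l_ne; case: ifP => a_pos; last by rewrite sub0mx.
  apply/scalemx_sub/IH; last by rewrite mdeg_lower // mdeg_a.
  by rewrite lower_ne 1?eq_sym // a0; lia.
have S_Ea : (ev k a *m Emx k d <= S)%MS by apply/submxMr/ev_sub_Amx.
rewrite ev_Emx big_ord3 a0 /= lower_raise // in S_Ea.
move: S_Ea (S_lowered i1 isT) (S_lowered i2 isT).
set T1 := (if _ then _ else _); set T2 := (if _ then _ else _) => S_sum S_T1 S_T2.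
have c_neq0 : coef k a i0 != 0 by rewrite natr_neq0 // a0 muln_gt0; lia.
rewrite -[ev k m]scale1r -(mulVf c_neq0) -scalerA; apply: scalemx_sub.
have -> : coef k a i0 *: ev k m = coef k a i0 *: ev k m + T1 + T2 - T2 - T1 by rewrite !addrK.
by apply: addmx_sub; [apply: addmx_sub|]; rewrite // eqmx_opp.
Qed.

Lemma Amx_mulE j : (j.+1 < d)%N -> (Amx k d j.+1 *m Emx k d :=: Amx k d j)%MS.
Proof.
move=> lt_jd; apply/eqmxP/andP; split; first exact: Amx_mulE_sub.
apply/row_subP => i; rewrite row_ev ev_Amx.
case: eqP => [mdeg_i | _]; last by rewrite scale0r sub0mx.
by rewrite scale1r ev_sub_AmxE.
Qed.

End Surjectivity.

Section DescendingMonomials.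
Variable d : nat.
Implicit Types (m : Mon d) (s : 'S_3).

(* Weakly (b = false) descending monomials represent the S_3-orbits; strictly
   descending ones (b = true) the orbits with trivial stabiliser. *)
Definition descending (b : bool) m := (m i1 + b <= m i0)%N && (m i2 + b <= m i1)%N.

Definition reps b j m := (mdeg m == j) && descending b m.

Lemma descendingW b m : descending b m -> descending false m.
Proof. by case/andP => ? ?; apply/andP; split; lia. Qed.

Lemma exists_descending m : exists s, descending false (act s m).
Proof.
have [p p_sorted] := exists_sort3 (fun i => m i).
by exists p^-1%g; rewrite /descending !ffunE invgK !addn0.
Qed.

(* The sum, the maximum and the minimum (through the maximum of [d - m i]) of
   the exponents are S_3-invariant and determine a descending triple. *)
Lemma descending_act_eq s m :
  descending false m -> descending false (act s m) -> act s m = m.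
Proof.
have sum_eq := mdeg_act s m.
have max_eq : \max_(i < 3) (act s m i : nat) = \max_(i < 3) (m i : nat) by exact: (big_act _ id).
have min_eq : \max_(i < 3) (d - act s m i)%N = \max_(i < 3) (d - m i)%N.
  exact: (big_act _ (fun x => d - x)%N).
move: (act s m) sum_eq max_eq min_eq => m'.
have := ltn_ord (m i0); have := ltn_ord (m i1); have := ltn_ord (m i2).
have := ltn_ord (m' i0); have := ltn_ord (m' i1); have := ltn_ord (m' i2).
rewrite !mdegE !big_ord3 /descending /= !addn0.
move=> ? ? ? ? ? ? sum_eq max_eq min_eq /andP [? ?] /andP [? ?].
by apply/ffunP; apply: ord3P; apply/val_inj => /=; lia.
Qed.

Lemma descending_stab s m : descending true m -> (act s m == m) = (s == 1%g).
Proof.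
move=> desc_m; apply/eqP/eqP => [act_m | ->]; last exact: act1.
have m_inj : injective (fun i => m i).
  move: desc_m; rewrite /descending /= => /andP [? ?].
  by apply: ord3P; apply: ord3P => //= /(congr1 val) /=; lia.
apply/permP => t; rewrite perm1.
have := congr1 (fun f : Mon d => f t) act_m; rewrite /= ffunE => /m_inj e.
by rewrite -{1}e permKV.
Qed.

Lemma exists_odd_stab m : descending false m -> ~~ descending true m ->
  exists2 t, act t m = m & odd_perm t.
Proof.
rewrite /descending !addn0 !addn1 => /andP [le10 le21] not_strict.
have [eq01 | ne01] := eqVneq (m i0 : nat) (m i1).
  exists (tperm i0 i1); last by rewrite odd_tperm.
  by apply/ffunP; apply: ord3P; rewrite ffunE tpermV permE; apply/val_inj.
have eq12 : (m i1 : nat) = m i2.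
  by move: not_strict ne01; rewrite negb_and -!leqNgt => /orP [?|?] /eqP; lia.
exists (tperm i1 i2); last by rewrite odd_tperm.
by apply/ffunP; apply: ord3P; rewrite ffunE tpermV permE; apply/val_inj.
Qed.

End DescendingMonomials.

Section IsotypicRank.
Local Open Scope ring_scope.
Variables (k : fieldType) (d : nat).
Hypothesis hk : [pchar k] =i pred0.
Local Notation n := (N d).
Implicit Types (m : Mon d) (s : 'S_3) (b : bool).

Definition chi b s : k := if b then (-1) ^+ odd_perm s else 1.

Lemma chiM b s t : chi b (s * t)%g = chi b s * chi b t.
Proof. by case: b; rewrite /chi ?mulr1 // odd_permM signr_addb. Qed.

Lemma chi_sqr b s : chi b s * chi b s = 1.
Proof. by case: b; rewrite /chi ?mulr1 // -signr_addb addbb. Qed.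

Local Notation Rey b := (reynolds (Pmx k d) (chi b)).

Lemma ev_reynolds_act b s m : ev k m *m Rey b = chi b s *: (ev k (act s m) *m Rey b).
Proof.
have := congr1 (mulmx (ev k m)) (rho_reynolds (@PmxM k d) (chiM b) (chi_sqr b) s).
by rewrite mulmxA ev_Pmx -scalemxAr => ->; rewrite scalerA chi_sqr scale1r.
Qed.

Lemma ev_reynolds_sign_eq0 m :
  descending false m -> ~~ descending true m -> ev k m *m Rey true = 0.
Proof.
move=> desc_m not_strict; have [t act_m odd_t] := exists_odd_stab desc_m not_strict.
have := ev_reynolds_act true t m; rewrite act_m /chi odd_t expr1 scaleN1r => eq_opp.
have : 2%:R *: (ev k m *m Rey true) = 0 by rewrite scaler_nat mulr2n {1}eq_opp addNr.
by move/eqP; rewrite scaler_eq0 (negbTE (natr_neq0 hk _)) //= => /eqP.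
Qed.

Definition Dmx b j : 'M[k]_n := diag_mx (\row_i (reps b j (mon i))%:R).

Lemma ev_Dmx b j m : ev k m *m Dmx b j = (reps b j m)%:R *: ev k m.
Proof. by rewrite ev_diag mxE idxK. Qed.

Lemma Amx_reynolds_sub b j : (Amx k d j *m Rey b <= Dmx b j *m Rey b)%MS.
Proof.
apply/row_subP => i; rewrite row_ev mulmxA ev_Amx -scalemxAl.
case: eqP => mdeg_i; last by rewrite scale0r sub0mx.
rewrite scale1r; have [s desc_s] := exists_descending (mon i).
rewrite (ev_reynolds_act b s); apply: scalemx_sub.
have mdeg_s : mdeg (act s (mon i)) = j by rewrite mdeg_act.
case rep_s : (reps b j (act s (mon i))).
  have <- : ev k (act s (mon i)) *m Dmx b j = ev k (act s (mon i)).
    by rewrite ev_Dmx rep_s scale1r.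
  by rewrite -mulmxA submxMl.
move: rep_s; rewrite /reps mdeg_s eqxx /=; case: b => /= not_desc; last by rewrite desc_s in not_desc.
by rewrite (ev_reynolds_sign_eq0 desc_s (negbT not_desc)) sub0mx.
Qed.

Lemma Dmx_reynolds_sub b j : (Dmx b j *m Rey b <= Amx k d j *m Rey b)%MS.
Proof.
have <- : Dmx b j *m Amx k d j = Dmx b j.
  apply: ev_matrixP => m; rewrite mulmxA ev_Dmx -scalemxAl ev_Amx scalerA.
  by case rep_m : (reps b j m); rewrite ?mul0r // (eqP (andP rep_m).1) eqxx mulr1.
by rewrite -mulmxA submxMl.
Qed.

(* The diagonal coefficient of [x^m] in the projection [Rey b]. *)
Definition stab_weight b m : k := \sum_s chi b s * (act s m == m)%:R.

Lemma stab_weight_neq0 b m : descending b m -> stab_weight b m != 0.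
Proof.
rewrite /stab_weight; case: b => desc_m.
  rewrite (eq_bigr (fun s => chi true s * (s == 1%g)%:R)) => [|s _]; last by rewrite descending_stab.
  rewrite (bigD1 1%g) //= big1 => [|s /negbTE ->]; last by rewrite mulr0.
  by rewrite eqxx mulr1 addr0 /chi odd_perm1 oner_neq0.
rewrite (eq_bigr (fun s => (act s m == m)%:R)) => [|s _]; last by rewrite mul1r.
by rewrite -natr_sum natr_neq0 // (bigD1 1%g) //= act1 eqxx.
Qed.

Lemma Dmx_reynolds_Dmx b j : Dmx b j *m Rey b *m Dmx b j =
  diag_mx (\row_i ((reps b j (mon i))%:R * stab_weight b (mon i))).
Proof.
apply: ev_matrixP => m; rewrite ev_diag mxE idxK !mulmxA ev_Dmx -!scalemxAl -scalerA.
case rep_m : (reps b j m); last by rewrite !scale0r.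
rewrite !scale1r /reynolds mulmx_sumr mulmx_suml /stab_weight scaler_suml.
apply: eq_bigr => s _; rewrite -scalemxAr -scalemxAl ev_Pmx ev_Dmx scalerA.
have [-> | act_ne] := eqVneq (act s m) m; first by rewrite rep_m.
case rep_s : (reps b j (act s m)); last by rewrite !mulr0 !scale0r.
case/negP: act_ne; apply/eqP/descending_act_eq.
  exact: descendingW (andP rep_m).2.
exact: descendingW (andP rep_s).2.
Qed.

Lemma rank_Dmx b j : \rank (Dmx b j) = #|[pred i : 'I_n | reps b j (mon i)]|.
Proof.
rewrite mxrank_diag; apply: eq_card => i; rewrite !inE mxE.
by case: (reps b j (mon i)); rewrite ?oner_neq0 ?eqxx.
Qed.

Lemma rank_Amx_reynolds b j :
  \rank (Amx k d j *m Rey b) = #|[pred i : 'I_n | reps b j (mon i)]|.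
Proof.
have -> : \rank (Amx k d j *m Rey b) = \rank (Dmx b j *m Rey b).
  by apply/eqmx_rank/andP; split; [apply: Amx_reynolds_sub | apply: Dmx_reynolds_sub].
rewrite -rank_Dmx; apply: mxrank_sandwich.
rewrite Dmx_reynolds_Dmx mxrank_diag rank_Dmx; apply: eq_card => i; rewrite !inE mxE.
case rep_i : (reps b j (mon i)); last by rewrite mul0r eqxx.
by rewrite mul1r stab_weight_neq0 // (andP rep_i).2.
Qed.

End IsotypicRank.

Section CountDescending.
Variable d : nat.
Implicit Types (m : Mon d) (b : bool).

Lemma card_mon (P : pred (Mon d)) : #|[pred i | P (mon i)]| = #|[set m : Mon d | P m]|.
Proof.
rewrite cardsE -(card_image (can_inj (@idxK d))); apply: eq_card => i.
by rewrite inE -[X in _ = (X \in _)]monK mem_image ?inE //; apply: can_inj (@idxK d).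
Qed.

Lemma card_interval lo hi : (hi < d)%N ->
  #|[set a : 'I_d | lo <= a <= hi]| = (hi.+1 - lo)%N.
Proof.
move=> lt_hi; rewrite -sum1_card big_mkcond /=.
rewrite (eq_bigr (fun a : 'I_d => nat_of_bool (lo <= a <= hi))) => [|a _]; last first.
  by rewrite inE; case: (_ <= _ <= _).
rewrite -(big_mkord xpredT (fun a => nat_of_bool (lo <= a <= hi))).
have -> : forall D, \sum_(0 <= a < D) nat_of_bool (lo <= a <= hi) = minn D hi.+1 - lo.
  elim=> [|D IH]; first by rewrite big_geq.
  by rewrite big_nat_recr //= IH; case: (leqP lo D); case: (leqP D hi) => /=; lia.
lia.
Qed.

Lemma card_reps_boundary b j : (j < d)%N -> (b <= j)%N ->
  #|[set m : Mon d | reps b j m & (m i0 : nat) == m i1 + b]| =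
  (((j - b) %/ 2).+1 - (j + 2) %/ 3)%N.
Proof.
move=> lt_jd le_bj; rewrite -(@card_interval ((j + 2) %/ 3)); last by lia.
have -> : [set a : 'I_d | (j + 2) %/ 3 <= a <= (j - b) %/ 2] =
    [set a : 'I_d | 2 * a + b <= j <= 3 * a].
  by apply/setP => a; rewrite !inE; apply/andP/andP => -[? ?]; split; lia.
rewrite -(@card_in_imset _ _ (fun m => m i1)).
  congr #|pred_of_set _|; apply/setP => a; rewrite inE.
  apply/imsetP/idP => [[m] | a_ok].
    by rewrite !inE /reps mdegE /descending => /andP [/andP [/eqP ? /andP [? ?]] /eqP ?] ->; lia.
  pose m := [ffun t => if t == i0 then insubd a (a + b)%N
    else if t == i1 then a else insubd a (j - (2 * a + b))%N] : Mon d.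
  have m0 : (m i0 : nat) = (a + b)%N by rewrite ffunE /= val_insubd ifT //; lia.
  have m1 : m i1 = a by rewrite ffunE.
  have m2 : (m i2 : nat) = (j - (2 * a + b))%N by rewrite ffunE /= val_insubd ifT //; lia.
  by exists m; rewrite // !inE /reps mdegE /descending m0 m1 m2; lia.
move=> m m'; rewrite !inE /reps !mdegE /descending.
move=> /andP [/andP [/eqP ? /andP [? ?]] /eqP ?] /andP [/andP [/eqP ? /andP [? ?]] /eqP ?].
by move=> /(congr1 (@nat_of_ord d)) ?; apply: eq_mon3; lia.
Qed.

Lemma card_reps_interior b j : (0 < j < d)%N ->
  #|[set m : Mon d | reps b j m & (m i0 : nat) != m i1 + b]| = #|[set m : Mon d | reps b j.-1 m]|.
Proof.
move=> /andP [j_gt0 lt_jd].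
have lt_raise m : reps b j.-1 m -> ((m i0).+1 < d)%N.
  by rewrite /reps mdegE => /andP [/eqP ? _]; lia.
rewrite -[RHS](@card_in_imset _ _ (@raise d)) => [|m m' /[!inE] rep_m rep_m' eq_raise]; last first.
  by rewrite -(lower_raise (lt_raise m rep_m)) eq_raise lower_raise // lt_raise.
congr #|pred_of_set _|; apply/setP => m; rewrite !inE; apply/andP/imsetP.
  move=> [rep_m ne_m]; exists (lower m i0); last first.
    by rewrite raise_lower //; move: rep_m ne_m; rewrite /reps /descending; lia.
  rewrite inE /reps /descending mdeg_lower ?lower_at ?lower_ne //;
    move: rep_m ne_m; rewrite /reps /descending; lia.
move=> [m' /[!inE] rep_m' ->]; have lt_m' := lt_raise m' rep_m'.
move: rep_m'; rewrite /reps /descending !mdegE raise_i0 // !raise_ne //; lia.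
Qed.

Lemma card_reps_step b j : (0 < j < d)%N ->
  #|[set m : Mon d | reps b j m]| =
  (#|[set m : Mon d | reps b j.-1 m]| + (((j - b) %/ 2).+1 - (j + 2) %/ 3))%N.
Proof.
move=> /andP [j_gt0 lt_jd].
rewrite -(cardsID [set m : Mon d | (m i0 : nat) == m i1 + b]) addnC.
rewrite -card_reps_interior ?j_gt0 // -card_reps_boundary //; last by case: b; lia.
by congr (_ + _)%N; apply: eq_card => m; rewrite !inE andbC.
Qed.

End CountDescending.

Section Multiplicities.
Local Open Scope ring_scope.

Lemma rank_KerEj_isotypic (k : fieldType) (hk : [pchar k]%R =i pred0) d (b : bool) j :
  (0 < j < d)%N ->
  \rank (KerEj k d j :&: isotypic (Pmx k d) (chi k b))%MS =
  (((j - b) %/ 2).+1 - (j + 2) %/ 3)%N.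
Proof.
move=> /andP [j_gt0 lt_jd].
have order_neq0 : #|'S_3|%:R != 0 :> k by rewrite card_Sn natr_neq0.
have Amx_surj : (Amx k d j *m Emx k d :=: Amx k d j.-1)%MS.
  by rewrite -{1}(prednK j_gt0); apply: Amx_mulE; rewrite ?prednK.
have := rank_ker_isotypic (@PmxM k d) (chiM k b) (chi_sqr k b) order_neq0
  (AmxK k d j) (fun s => PmxA k d s j) (@PmxE k d) Amx_surj.
rewrite !rank_Amx_reynolds // !card_mon (@card_reps_step d b j) ?j_gt0 //.
by rewrite /KerEj; lia.
Qed.

End Multiplicities.

Theorem lemma5p1 (k : closedFieldType) (hk : [pchar k]%R =i pred0) :
  (forall d : nat, odd d -> (3 <= d)%N ->
     triv k d d.-1 = (d.-1 %/ 6).+1 /\ sign k d d.-1 = d.-1 %/ 6) /\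
  (forall d : nat, ~~ odd d -> (4 <= d)%N ->
     triv k d d.-1 = (d + 2) %/ 6 /\ sign k d d.-1 = (d + 2) %/ 6).
Proof.
have triv_rank d : triv k d d.-1 = \rank (KerEj k d d.-1 :&: isotypic (Pmx k d) (chi k false))%MS.
  by [].
have sign_rank d : sign k d d.-1 = \rank (KerEj k d d.-1 :&: isotypic (Pmx k d) (chi k true))%MS.
  by [].
split=> d d_parity d_ge; rewrite triv_rank sign_rank !rank_KerEj_isotypic //; lia.
Qed.
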